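(* Let $(F_n)$ be the Fibonacci sequence with $F_0=0$, $F_1=1$, $F_n=F_{n-1}+F_{n-2}$, extended by $F_{-1}=1$. For every integer $m\ge 0$, $$[\underbrace{11,11,\dots,11}_{m},\,3]=\frac{F_{5m+4}}{F_{5m-1}},$$ where the continued fraction has $m+1$ entries $a_0,\dots,a_m$ with $a_i=11$ for $0\le i<m$ and $a_m=3$.
   Context: For numbers $a_0,a_1,\dots,a_m$, the finite simple continued fraction $[a_0,a_1,\dots,a_m]$ denotes $a_0+\cfrac{1}{a_1+\cfrac{1}{\ddots+\cfrac{1}{a_m}}}$, evaluated as a rational number; $[a_0]=a_0$. *)

From mathcomp Require Import all_boot all_order all_algebra.
Set Implicit Arguments. Unset Strict Implicit. Unset Printing Implicit Defensive.
Import Order.TTheory GRing.Theory Num.Theory.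
Local Open Scope ring_scope.

Fixpoint fib (n : nat) : nat :=
  match n with
  | 0 => 0
  | 1 => 1
  | (k.+1 as n').+1 => fib n' + fib k
  end.

(* Fibonacci numbers extended to integer indices by the recurrence,
   F_{-n} = (-1)^(n+1) F_n; in particular F_{-1} = 1. *)
Definition fibz (k : int) : int :=
  match k with
  | Posz n => (fib n)%:Z
  | Negz n => (-1) ^+ n * (fib n.+1)%:Z  (* Negz n = -(n+1) *)
  end.

(* Finite simple continued fraction [a_0; a_1, ..., a_m] as a rational.
   The empty list is never used (value 0 by convention). *)
Fixpoint cfrac (s : seq rat) : rat :=
  match s with
  | [::] => 0
  | [:: a] => a
  | a :: s' => a + (cfrac s')^-1
  end.

From mathcomp Require Import all_boot all_order all_algebra.
From mathcomp Require Import ring zify.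
Import Order.TTheory GRing.Theory Num.Theory.
Local Open Scope ring_scope.

(* The Lucas number L_5 = 11 gives F_(k+10) = 11 F_(k+5) + F_k for every
   integer k, so prepending 11 to [11, ..., 11, 3] maps F_(k+5) / F_k to
   11 + F_k / F_(k+5) = F_(k+10) / F_(k+5).  The base case is F_4 / F_(-1) = 3,
   which is why the extension F_(-1) = 1 is needed. *)

Lemma fibSS (n : nat) : fib n.+2 = (fib n.+1 + fib n)%N.
Proof. by []. Qed.

Lemma fib_gt0 (n : nat) : (0 < fib n.+1)%N.
Proof.
elim: n {-2}n (leqnn n) => [|n IHn] [|k] // le_kn.
by rewrite fibSS addn_gt0 IHn.
Qed.

Lemma fibzD2 (k : int) : fibz (k + 2) = fibz (k + 1) + fibz k.
Proof.
case: k => [n|[|[|n]]] //.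
- by rewrite -!PoszD addn2 addn1.
- have -> : Negz n.+2 + 2 = Negz n by lia.
  have -> : Negz n.+2 + 1 = Negz n.+1 by lia.
  by rewrite /fibz !fibSS !PoszD !exprS; ring.
Qed.

Lemma fibzD10 (k : int) : fibz (k + 10) = 11 * fibz (k + 5) + fibz k.
Proof.
pose f j := fibz (k + j%:Z).
have fSS j : f j.+2 = f j.+1 + f j.
  rewrite /f; have -> : k + j.+2%:Z = k + j%:Z + 2 by lia.
  have -> : k + j.+1%:Z = k + j%:Z + 1 by lia.
  exact: fibzD2.
have -> : fibz k = f 0 by rewrite /f addr0.
rewrite -[fibz (k + 10)]/(f 10) -[fibz (k + 5)]/(f 5) !fSS.
ring.
Qed.

Lemma cfrac_cons (a : rat) (s : seq rat) :
  s != [::] -> cfrac (a :: s) = a + (cfrac s)^-1.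
Proof. by case: s. Qed.

Theorem theorem4 (m : nat) :
  cfrac (rcons (nseq m 11%:R) 3%:R) =
  (fibz (5 * m + 4)%N%:Z)%:~R / (fibz ((5 * m)%N%:Z - 1))%:~R.
Proof.
elim: m => [|m IHm]; first by rewrite /= divr1.
rewrite [rcons _ _]/= cfrac_cons; last by case: (m).
rewrite IHm invf_div.
set k := (5 * m)%N%:Z - 1.
have -> : (5 * m + 4)%N%:Z = k + 5 by rewrite /k; lia.
have -> : (5 * m.+1 + 4)%N%:Z = k + 10 by rewrite /k; lia.
have -> : (5 * m.+1)%N%:Z - 1 = k + 5 by rewrite /k; lia.
have den_neq0 : (fibz (k + 5))%:~R != 0 :> rat.
  have -> : k + 5 = (5 * m + 3).+1%:Z by rewrite /k; lia.
  by rewrite intr_eq0 eqz_nat -lt0n fib_gt0.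
rewrite fibzD10 rmorphD rmorphM /=.
by field.
Qed.
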